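(* Let $m\ge1$, let $p$ be a prime, and let $\lambda\vdash n$ be a partition with $2$-core of size $\binom{m+1}{2}$. If $w_p(\lambda)=t\le\lfloor\frac{m+1}{2}\rfloor$, then $n\ge N_t:=tp-t(2(m-t)+1)+\binom{m+1}{2}$.
   Context: Partitions $\lambda=(\lambda_1\ge\dots\ge\lambda_r\ge0)$ may have zero parts; the degree sequence is $n_\lambda=(\lambda_r,\lambda_{r-1}+1,\dots,\lambda_1+r-1)$. For an integer $q\ge1$, removing a $q$-hook from $\lambda$ means replacing an entry $a$ of $n_\lambda$ by $a-q$, where $a-q\ge0$ and $a-q\notin n_\lambda$, and taking the partition of the same length with the resulting degree sequence (equivalently removing a connected border strip of $q$ cells from the Young diagram). The $q$-weight $w_q(\lambda)$ is the maximal number of $q$-hooks that can be removed successively. Removing $2$-hooks until impossible yields the $2$-core, which is a staircase $(m,m-1,\dots,1)$ padded with zeros, of size $\binom{m+1}{2}$. *)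

From mathcomp Require Import all_boot all_order all_algebra.
Set Implicit Arguments. Unset Strict Implicit. Unset Printing Implicit Defensive.

Definition is_partition (la : seq nat) : bool := sorted geq la.

Definition psize (la : seq nat) : nat := sumn la.

(* Listed as a sequence; its order is
   irrelevant below (only used up to permutation). *)
Definition degseq (la : seq nat) : seq nat :=
  [seq nth 0 la i + (size la).-1 - i | i <- iota 0 (size la)].

Definition remove_hook (q : nat) (la la' : seq nat) : Prop :=
  exists a, [/\ a \in degseq la, q <= a, (a - q) \notin degseq la &
    is_partition la'] /\ size la' = size la /\
    perm_eq (degseq la')
      [seq (if x == a then a - q else x) | x <- degseq la].

Fixpoint can_remove (q k : nat) (la : seq nat) : Prop :=
  match k with
  | 0 => True
  | k'.+1 => exists la', remove_hook q la la' /\ can_remove q k' la'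
  end.

Definition qweight_is (q : nat) (la : seq nat) (t : nat) : Prop :=
  can_remove q t la /\ ~ can_remove q t.+1 la.

Inductive reach (q : nat) : seq nat -> seq nat -> Prop :=
  | reach_refl la : reach q la la
  | reach_step la la' la'' : remove_hook q la la' -> reach q la' la'' ->
      reach q la la''.

Definition two_core_size (la : seq nat) (s : nat) : Prop :=
  exists c, [/\ reach 2 la c, ~ (exists c', remove_hook 2 c c') & psize c = s].

From mathcomp Require Import all_boot all_order all_algebra.
From mathcomp Require Import zify ring.
Set Implicit Arguments. Unset Strict Implicit. Unset Printing Implicit Defensive.
Import Order.TTheory GRing.Theory Num.Theory.

(* Let X be the degree sequence (beta-set) of a partition la with r parts, so
   that X consists of r distinct naturals with sumn X = |la| + C(r, 2).  If X
   has e even and o odd entries, call D = e - o the charge of la.  Halving the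
   entries of each parity class yields two sets of distinct naturals, whose
   sums are at least C(e, 2) and C(o, 2); this gives 2|la| >= D(D - 1), with
   equality when X is closed under x |-> x - 2, i.e. when la is a 2-core.
   Removing a 2-hook preserves D, and removing any hook changes it by at most 2.
   Hence the 2-core of la, of size C(m+1, 2), forces D(D - 1) = m(m + 1), i.e.
   D = m + 1 or D = -m; and removing t = w_p(la) p-hooks leaves a partition mu
   of size n - tp whose charge D' is within 2t of D.  Minimising D'(D' - 1)
   over that window (possible since 2t <= m + 1) gives
   2(n - tp) >= D'(D' - 1) >= m(m + 1) - 2t(2(m - t) + 1), the theorem. *)

Lemma size_degseq la : size (degseq la) = size la.
Proof. by rewrite /degseq size_map size_iota. Qed.

Lemma degseq_cons x la : degseq (x :: la) = (x + size la) :: degseq la.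
Proof.
rewrite /degseq /= subn0; congr (_ :: _).
rewrite -(addn0 1) iotaDl -map_comp; apply/eq_in_map => i.
by rewrite mem_iota add0n /= => lt_i; rewrite add0n; lia.
Qed.

Lemma sumn_degseq la : sumn (degseq la) = psize la + 'C(size la, 2).
Proof.
elim: la => [|x la IH] //.
by rewrite degseq_cons /= IH binS bin1 /psize /=; lia.
Qed.

Lemma degseq_bound la : is_partition la ->
  forall y, y \in degseq la -> y < head 0 la + size la.
Proof.
elim: la => [|x la IH] //= Pla y.
rewrite degseq_cons in_cons => /orP[/eqP->|y_in]; first lia.
case: la IH Pla y_in => [|z la] // IH /= /andP[le_zx Pla] /(IH Pla) /=; lia.
Qed.

Lemma degseq_uniq la : is_partition la -> uniq (degseq la).
Proof.
elim: la => [|x la IH] // Pla.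
have Pla' : is_partition la by apply: path_sorted Pla.
rewrite degseq_cons /= IH // andbT; apply/negP => /(degseq_bound Pla')/=.
by case: la Pla {IH Pla'} => [|z la] //= /andP[]; lia.
Qed.

Fixpoint part_of_beta (s : seq nat) : seq nat :=
  if s is x :: s' then (x - size s') :: part_of_beta s' else [::].

Lemma size_part_of_beta s : size (part_of_beta s) = size s.
Proof. by elim: s => //= x s ->. Qed.

Lemma size_gtn_sorted x s : sorted gtn (x :: s) -> size s <= x.
Proof.
elim: s x => [|y s IH] x //= /andP[lt_yx sorted_ys].
by have := IH y sorted_ys; lia.
Qed.

Lemma part_of_betaK s : sorted gtn s ->
  is_partition (part_of_beta s) /\ degseq (part_of_beta s) = s.
Proof.
elim: s => [|x s IH] //= sorted_xs.
have [Ps Ds] := IH (path_sorted sorted_xs).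
have le_sx := size_gtn_sorted sorted_xs.
split; last by rewrite degseq_cons size_part_of_beta subnK // Ds.
case: s sorted_xs {IH Ds le_sx} Ps => [|y s] //= /andP[lt_yx sorted_ys] Ps.
rewrite /is_partition /= Ps andbT.
by have := size_gtn_sorted sorted_ys; lia.
Qed.

Lemma beta_set_partition Y : uniq Y ->
  exists la, [/\ is_partition la, size la = size Y & perm_eq (degseq la) Y].
Proof.
move=> uY; set s := sort geq Y.
have sorted_s : sorted gtn s.
  by rewrite gtn_sorted_uniq_geq sort_uniq uY sort_sorted // => a b; apply: leq_total.
have [Ps Ds] := part_of_betaK sorted_s.
exists (part_of_beta s); rewrite size_part_of_beta Ds perm_sort size_sort.
by split.
Qed.

Lemma perm_replace q a X : uniq X -> a \in X ->
  perm_eq [seq if x == a then a - q else x | x <- X] ((a - q) :: rem a X).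
Proof.
move=> uX a_in; rewrite (perm_trans (perm_map _ (perm_to_rem a_in))) //= eqxx perm_cons.
rewrite -[X in perm_eq _ X]map_id; apply/permP => P; congr count.
apply/eq_in_map => x x_in; case: eqP => // x_eq.
by move: x_in; rewrite x_eq mem_rem_uniqF.
Qed.

Lemma bin2_le_sumn Y : uniq Y -> 'C(size Y, 2) <= sumn Y.
Proof.
move=> uY; have [la [_ <- perm_la]] := beta_set_partition uY.
by rewrite -(perm_sumn perm_la) sumn_degseq leq_addl.
Qed.

Lemma sumn_downclosed Y : uniq Y -> (forall y, y \in Y -> 0 < y -> y.-1 \in Y) ->
  sumn Y = 'C(size Y, 2).
Proof.
move=> uY closedY.
have below_in y : y \in Y -> {subset iota 0 y.+1 <= Y}.
  move=> y_in k; rewrite mem_iota leq0n add0n ltnS /=.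
  elim: y y_in => [|y IH] y_in; first by rewrite leqn0 => /eqP->.
  rewrite leq_eqVlt ltnS => /orP[/eqP->//|].
  by apply: IH; apply: closedY y_in _.
have sub_iota : {subset Y <= iota 0 (size Y)}.
  move=> y y_in; rewrite mem_iota leq0n add0n /=.
  by have := uniq_leq_size (iota_uniq 0 y.+1) (below_in y y_in); rewrite size_iota.
have [_ perm_iota] := uniq_min_size uY sub_iota (eq_leq (size_iota _ _)).
rewrite (perm_sumn (uniq_perm uY (iota_uniq _ _) perm_iota)).
by rewrite sumnE -bin2_sum /index_iota subn0.
Qed.

Definition halves (b : bool) (X : seq nat) : seq nat := [seq x./2 | x <- X & odd x == b].

Lemma size_halves b X : size (halves b X) = count (fun x => odd x == b) X.
Proof. by rewrite size_map size_filter. Qed.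

Lemma size_halves_split X : size (halves false X) + size (halves true X) = size X.
Proof.
rewrite !size_halves -(count_predC (fun x => odd x == false)).
by congr (_ + _); apply: eq_count => x /=; case: odd.
Qed.

Lemma sumn_halves X :
  sumn X = (sumn (halves false X) + sumn (halves true X)).*2 + size (halves true X).
Proof.
elim: X => [|x X IH] //=; rewrite /halves /= in IH *.
by have := odd_double_half x; case: (odd x) => /= x_eq; rewrite IH; lia.
Qed.

Lemma uniq_halves b X : uniq X -> uniq (halves b X).
Proof.
move=> uX; rewrite map_inj_in_uniq ?filter_uniq // => x y.
rewrite !mem_filter => /andP[/eqP odd_x _] /andP[/eqP odd_y _] eq_half.
by rewrite -[x]odd_double_half -[y]odd_double_half odd_x odd_y eq_half.
Qed.

(* The beta-sets of 2-cores: no entry x >= 2 can move down to x - 2. *)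
Definition closed2 (X : seq nat) : Prop := forall x, x \in X -> 2 <= x -> x - 2 \in X.

Lemma halves_downclosed b X : closed2 X ->
  forall y, y \in halves b X -> 0 < y -> y.-1 \in halves b X.
Proof.
move=> closedX y /mapP[x]; rewrite mem_filter => /andP[/eqP odd_x x_in] -> half_gt0.
have x_ge2 : 2 <= x by rewrite -[x]odd_double_half -!mul2n in half_gt0 *; lia.
apply/mapP; exists (x - 2); first by rewrite mem_filter closedX // oddB // odd_x addbF eqxx.
by rewrite -[x in RHS]odd_double_half -!mul2n; lia.
Qed.

(* A partition from which no 2-hook can be removed has a closed2 beta-set:
   otherwise x |-> x - 2 would again give a beta-set, hence a 2-hook. *)
Lemma two_core_closed c : is_partition c -> ~ (exists c', remove_hook 2 c c') ->
  closed2 (degseq c).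
Proof.
move=> Pc no_hook x x_in x_ge2; apply/negPn/negP => fresh; apply: no_hook.
have uc := degseq_uniq Pc.
have perm_new := perm_replace 2 uc x_in.
have u_new : uniq [seq if y == x then x - 2 else y | y <- degseq c].
  by rewrite (perm_uniq perm_new) /= rem_uniq // andbT; apply: contra fresh => /mem_rem.
have [la [Pla size_la perm_la]] := beta_set_partition u_new.
exists la, x; split; first by split.
by rewrite size_la size_map size_degseq.
Qed.

Section Charge.
Local Open Scope ring_scope.

Lemma bin2_double k : 2 * ('C(k, 2))%:Z = k%:Z * (k%:Z - 1).
Proof. by elim: k => [|k IH] //; rewrite binS bin1 PoszD mulrDr IH; nia. Qed.

Definition balance (X : seq nat) : int :=
  (size (halves false X))%:Z - (size (halves true X))%:Z.

Lemma balance_defect X :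
  2 * (sumn X)%:Z - (balance X * (balance X - 1) + (size X)%:Z * ((size X)%:Z - 1))
  = 4 * ((sumn (halves false X))%:Z - ('C(size (halves false X), 2))%:Z)
  + 4 * ((sumn (halves true X))%:Z - ('C(size (halves true X), 2))%:Z).
Proof.
rewrite /balance -(size_halves_split X) {1}(sumn_halves X) -!mul2n.
have := bin2_double (size (halves false X)); have := bin2_double (size (halves true X)).
move: (size (halves false X)) (size (halves true X)) => e o.
by move: ('C(e, 2)) ('C(o, 2)) => ce co; nia.
Qed.

Lemma balance_sumn_bound X : uniq X ->
  balance X * (balance X - 1) + (size X)%:Z * ((size X)%:Z - 1) <= 2 * (sumn X)%:Z.
Proof.
move=> uX; rewrite -subr_ge0 balance_defect.
by rewrite addr_ge0 ?mulr_ge0 ?subr_ge0 ?lez_nat ?bin2_le_sumn ?uniq_halves.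
Qed.

Lemma balance_sumn_closed X : uniq X -> closed2 X ->
  balance X * (balance X - 1) + (size X)%:Z * ((size X)%:Z - 1) = 2 * (sumn X)%:Z.
Proof.
move=> uX closedX; apply/eqP; rewrite eq_sym -subr_eq0 balance_defect.
by rewrite !sumn_downclosed ?uniq_halves //; try exact: halves_downclosed; rewrite !subrr.
Qed.

Definition parity_sign (x : nat) : int := if odd x then -1 else 1.

Lemma balance_cons x X : balance (x :: X) = parity_sign x + balance X.
Proof. by rewrite /balance /parity_sign !size_halves /=; case: odd => /=; lia. Qed.

Lemma balance_perm X Y : perm_eq X Y -> balance X = balance Y.
Proof. by move=> pXY; rewrite /balance !size_halves !(permP pXY). Qed.

Definition charge (la : seq nat) : int := balance (degseq la).

Lemma charge_psize_bound la : is_partition la ->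
  charge la * (charge la - 1) <= 2 * (psize la)%:Z.
Proof.
move=> Pla; have := balance_sumn_bound (degseq_uniq Pla).
by have := bin2_double (size la); rewrite sumn_degseq size_degseq /charge; lia.
Qed.

(* Equality holds for 2-cores: a 2-core is determined by its charge. *)
Lemma charge_psize_core la : is_partition la -> closed2 (degseq la) ->
  charge la * (charge la - 1) = 2 * (psize la)%:Z.
Proof.
move=> Pla closed_la; have := balance_sumn_closed (degseq_uniq Pla) closed_la.
by have := bin2_double (size la); rewrite sumn_degseq size_degseq /charge; lia.
Qed.

Lemma remove_hook_spec q la la' : is_partition la -> remove_hook q la la' ->
  [/\ is_partition la', (psize la' + q)%N = psize la,
      `|charge la' - charge la| <= 2 & (~~ odd q -> charge la' = charge la)].
Proof.
move=> Pla [a [[a_in le_qa _ Pla'] [size_eq perm_la']]].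
have perm_new := perm_trans perm_la' (perm_replace q (degseq_uniq Pla) a_in).
have perm_old := perm_to_rem a_in.
have := perm_sumn perm_new; have := perm_sumn perm_old.
rewrite /= !sumn_degseq size_eq => sum_old sum_new.
rewrite /charge (balance_perm perm_new) (balance_perm perm_old) !balance_cons.
rewrite /parity_sign oddB //; split => //; first by lia.
  by case: (odd a); case: (odd q) => /=; lia.
by move=> /negbTE->; rewrite addbF.
Qed.

Lemma can_remove_spec q t la : is_partition la -> can_remove q t la ->
  exists mu, [/\ is_partition mu, (psize mu + t * q)%N = psize la
               & `|charge mu - charge la| <= 2 * t%:Z].
Proof.
elim: t la => [|t IH] la Pla /=.
  by move=> _; exists la; rewrite mul0n addn0 subrr.
move=> [la' [hook_la' can_la']].
have [Pla' size_la' dist_la' _] := remove_hook_spec Pla hook_la'.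
have [mu [Pmu size_mu dist_mu]] := IH la' Pla' can_la'.
by exists mu; split => //; lia.
Qed.

Lemma reach_two_charge la c : reach 2 la c -> is_partition la ->
  is_partition c /\ charge c = charge la.
Proof.
elim=> [//|{}la la' {}c hook_la' _ IH] Pla.
have [Pla' _ _ charge_la'] := remove_hook_spec Pla hook_la'.
by have [Pc ->] := IH Pla'; split => //; apply: charge_la'.
Qed.

Lemma mono_pronic (k x : int) : 0 <= k -> k <= x -> k * (k - 1) <= x * (x - 1).
Proof.
move=> k_ge0 le_kx.
have -> : x * (x - 1) = k * (k - 1) + (x - k) * (x + k - 1) by ring.
rewrite lerDl; case: (lerP 1 (x + k)) => [x_k_ge1|x_k_lt1].
  by apply: mulr_ge0; lia.
by have [-> ->] : x = 0 /\ k = 0 by lia.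
Qed.

(* If D(D - 1) = m(m + 1) and D' is within 2t <= m + 1 of D, then D'(D' - 1)
   is at least its value k(k - 1) at the nearest end k = m + 1 - 2t. *)
Lemma charge_distance_bound (m t D D' : int) :
  0 <= t -> 2 * t <= m + 1 -> D * (D - 1) = m * (m + 1) -> `|D' - D| <= 2 * t ->
  m * (m + 1) - 2 * t * (2 * (m - t) + 1) <= D' * (D' - 1).
Proof.
move=> t_ge0 t_le D_root dist.
have : (D - (m + 1)) * (D + m) = 0.
  have -> : (D - (m + 1)) * (D + m) = D * (D - 1) - m * (m + 1) by ring.
  by rewrite D_root subrr.
move/eqP; rewrite mulf_eq0 subr_eq0 addr_eq0 => D_roots.
have k_pronic : (m + 1 - 2 * t) * (m + 1 - 2 * t - 1)
    = m * (m + 1) - 2 * t * (2 * (m - t) + 1) by ring.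
rewrite -k_pronic; case/orP: D_roots => /eqP D_eq.
  by apply: mono_pronic; move: dist; rewrite D_eq; lia.
rewrite (_ : D' * _ = (1 - D') * (1 - D' - 1)); last by ring.
by apply: mono_pronic; move: dist; rewrite D_eq; lia.
Qed.

End Charge.

Theorem mainTheorem9 (m p n t : nat) (la : seq nat) :
  1 <= m -> prime p ->
  is_partition la -> psize la = n ->
  two_core_size la 'C(m.+1, 2) ->
  qweight_is p la t -> t <= m.+1./2 ->
  ((t * p)%:Z - (t * (2 * (m - t) + 1))%:Z + ('C(m.+1, 2))%:Z <= n%:Z)%R.
Proof.
move=> m_ge1 _ Pla <- [c [reach_c no_hook size_c]] [can_t _] t_le.
have [Pc charge_c] := reach_two_charge reach_c Pla.
have core := charge_psize_core Pc (two_core_closed Pc no_hook).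
rewrite size_c charge_c bin2_double in core.
have charge_root : (charge la * (charge la - 1) = m%:Z * (m%:Z + 1))%R by move: core; nia.
have two_t_le : (2 * t%:Z <= m%:Z + 1)%R.
  by move: t_le; rewrite -[m.+1]odd_double_half -addnn; lia.
have [mu [Pmu size_mu dist]] := can_remove_spec Pla can_t.
have := charge_distance_bound (le0z_nat t) two_t_le charge_root dist.
have := charge_psize_bound Pmu; have := bin2_double m.+1.
by nia.
Qed.
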